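(* Let $X$ be a one- or two-sided subshift with $\mathcal L(X)=\mathcal L(\tilde X)$ and let $p_X(n)$ be the number of blocks of length $n$ in $\mathcal L(X)$. Then for every $n\ge1$ the number of distinct paths of length $n$ in the HB diagram of $X$ that begin at a vertex which is a block of length one equals $p_X(n)$.
   Context: Let $\mathcal A$ be a finite alphabet and $\sigma$ the shift, $(\sigma x)_i=x_{i+1}$. A one-sided subshift is a nonempty closed $\sigma$-invariant $X^+\subseteq\mathcal A^{\mathbb N}$; its natural extension is $\tilde X=\{x\in\mathcal A^{\mathbb Z}: x_px_{p+1}\dots\in X^+ \text{ for all } p\in\mathbb Z\}$. For a two-sided subshift $X\subseteq\mathcal A^{\mathbb Z}$, $X^+$ is the set of right rays of points of $X$, so $\tilde X=X$. $\mathcal L(Y)$ denotes the set of finite blocks occurring in points of $Y$. For $a_{-n}\dots a_0\in\mathcal L(\tilde X)$, $\mathrm{fol}(a_{-n}\dots a_0)=\{b_0b_1\dots\in X^+:\exists b\in\tilde X \text{ with } b_{-n}\dots b_0=a_{-n}\dots a_0\}$. A block $a_{-n}\dots a_0\in\mathcal L(\tilde X)$ with $n\ge1$ is significant if $\mathrm{fol}(a_{-n}\dots a_0)\subsetneq\mathrm{fol}(a_{-n+1}\dots a_0)$; single symbols in $\mathcal L(\tilde X)$ are also counted as significant. $\mathrm{sig}(a_{-n}\dots a_0)$ is the longest significant suffix. The HB diagram has vertex set the significant blocks of $\tilde X$ and an arrow $\alpha\to\beta$ iff there is a symbol $b$ with $\alpha b\in\mathcal L(\tilde X)$ and $\beta=\mathrm{sig}(\alpha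 b)$. The length of a path is its number of vertices. *)

From mathcomp Require Import all_boot.
From mathcomp Require Import boolp.
From Stdlib Require Import ZArith.

Set Implicit Arguments.
Unset Strict Implicit.
Unset Printing Implicit Defensive.

Section HB.
Variable A : finType.

Definition shift1 (x : nat -> A) : nat -> A := fun i => x i.+1.
Definition shift2 (x : Z -> A) : Z -> A := fun i => x (i + 1)%Z.

(* one-sided subshift: nonempty, closed (product topology), sigma(X) ⊆ X *)
Definition one_sided_subshift (Xp : (nat -> A) -> Prop) : Prop :=
  (exists x, Xp x) /\
  (forall x, (forall m : nat, exists y, Xp y /\ forall i, i < m -> y i = x i) -> Xp x) /\
  (forall x, Xp x -> Xp (shift1 x)).

Definition two_sided_subshift (X : (Z -> A) -> Prop) : Prop :=
  (exists x, X x) /\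
  (forall x, (forall m : nat, exists y, X y /\
       forall i : Z, (Z.abs i <= Z.of_nat m)%Z -> y i = x i) -> X x) /\
  (forall x, X x <-> X (shift2 x)).

Definition natext (Xp : (nat -> A) -> Prop) (x : Z -> A) : Prop :=
  forall p : Z, Xp (fun i => x (p + Z.of_nat i)%Z).

Definition rays (X : (Z -> A) -> Prop) (b : nat -> A) : Prop :=
  exists x, X x /\ forall i : nat, b i = x (Z.of_nat i).

Definition lang1 (Xp : (nat -> A) -> Prop) (w : seq A) : Prop :=
  exists x (p : nat), Xp x /\ w = mkseq (fun i => x (p + i)) (size w).

Definition lang2 (Y : (Z -> A) -> Prop) (w : seq A) : Prop :=
  exists x (p : Z), Y x /\ w = mkseq (fun i => x (p + Z.of_nat i)%Z) (size w).

Definition complexity (L : seq A -> Prop) (n : nat) : nat :=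
  #|[set w : n.-tuple A | `[< L (val w) >] ]|.

(* HB diagram; Xp plays the role of X^+, Y the role of \tilde X.
   A block a_{-n} ... a_0 is the list [:: a_{-n}; ...; a_0]. *)
Section Diagram.
Variables (Xp : (nat -> A) -> Prop) (Y : (Z -> A) -> Prop).

Definition fol (w : seq A) (b : nat -> A) : Prop :=
  Xp b /\ exists x, Y x /\
    mkseq (fun i => x (Z.of_nat i - Z.of_nat (size w).-1)%Z) (size w) = w /\
    forall i : nat, b i = x (Z.of_nat i).

Definition significant (w : seq A) : Prop :=
  lang2 Y w /\
  (size w = 1 \/
   (2 <= size w /\ (forall b, fol w b -> fol (behead w) b) /\
    exists b, fol (behead w) b /\ ~ fol w b)).

Definition is_sig (w v : seq A) : Prop :=
  (exists u, w = u ++ v) /\ significant v /\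
  forall u' v', w = u' ++ v' -> significant v' -> size v' <= size v.

Definition arrow (alpha beta : seq A) : Prop :=
  exists b : A, lang2 Y (rcons alpha b) /\ is_sig (rcons alpha b) beta.

(* a path of length n (= n vertices) starting at a block of length one *)
Definition HBpath (n : nat) (p : seq (seq A)) : Prop :=
  size p = n /\
  (forall v, v \in p -> significant v) /\
  size (head [::] p) = 1 /\
  forall i, i.+1 < n -> arrow (nth [::] p i) (nth [::] p i.+1).

Definition HBpath_count (n m : nat) : Prop :=
  exists s : seq (seq (seq A)),
    uniq s /\ (forall p, p \in s <-> HBpath n p) /\ size s = m.

End Diagram.
End HB.

From mathcomp Require Import all_boot.
From mathcomp Require Import boolp.
From Stdlib Require Import ZArith Lia.
From mathcomp Require Import zify.

(* The follower set of a block depends only on its longest significant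
   suffix, because removing a non-significant leading symbol does not change
   the follower set.  Hence sig(w b) = sig(sig(w) b), the block w b occurs iff
   sig(w) b does, and sig(w) ends with the last symbol of w.  So sending a block
   a_1 ... a_n to the path sig(a_1) -> sig(a_1 a_2) -> ... -> sig(a_1 ... a_n)
   is a bijection from the blocks of length n onto the paths with n vertices
   starting at a vertex of length one; the inverse reads off the last symbol
   of every vertex. *)

Set Implicit Arguments.
Unset Strict Implicit.
Unset Printing Implicit Defensive.

Lemma suffix_of_cat_size (T : Type) (w u1 v1 u2 v2 : seq T) :
  w = u1 ++ v1 -> w = u2 ++ v2 -> size v1 <= size v2 -> exists u, v2 = u ++ v1.
Proof.
move=> w1 w2 le_v12.
have le_u21 : size u2 <= size u1.
  have := congr1 size w1; rewrite w2 !size_cat => sz_w.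
  by rewrite -(leq_add2r (size v1)) -sz_w leq_add2l.
exists (take (size u1 - size u2) v2).
rewrite -{1}(cat_take_drop (size u1 - size u2) v2); congr (_ ++ _).
have -> : v2 = drop (size u2) w by rewrite w2 drop_size_cat.
by rewrite drop_drop subnK // w1 drop_size_cat.
Qed.

Lemma behead_drop (T : Type) j (w : seq T) : behead (drop j w) = drop j.+1 w.
Proof. by elim: w j => [|a w IH] [|j] //=; rewrite drop0. Qed.

Lemma last_drop (T : Type) (x0 : T) j v : j < size v -> last x0 (drop j v) = last x0 v.
Proof. by elim: v x0 j => [|a v IH] x0 [|j] //= lt_jv; rewrite IH //; case: v lt_jv IH. Qed.

Lemma rcons_neq0 (T : eqType) (x : T) (s : seq T) : rcons s x != [::].
Proof. by case: s. Qed.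

Lemma take_neq0 (T : eqType) k (w : seq T) : 0 < k -> k <= size w -> take k w != [::].
Proof. by move=> k_gt0 le_kw; rewrite -size_eq0 size_take; case: ltnP; lia. Qed.

Section HBDiagram.
Variable A : finType.
Variables (Xp : (nat -> A) -> Prop) (Y : (Z -> A) -> Prop).
Hypothesis Y_shift2 : forall x, Y x <-> Y (shift2 x).
Hypothesis Y_rays : forall x, Y x -> Xp (fun i => x (Z.of_nat i)).

Lemma Y_translate k x : Y x -> Y (fun i => x (i + k)%Z).
Proof.
elim/Z.peano_ind: k x => [|k IHk|k IHk] x Yx.
- by under eq_fun do rewrite Z.add_0_r.
- have -> : (fun i => x (i + Z.succ k)%Z) = shift2 (fun i => x (i + k)%Z).
    by apply: funext => i; rewrite /shift2; f_equal; lia.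
  by apply/(Y_shift2 (fun i => x (i + k)%Z))/IHk.
- apply/Y_shift2.
  have -> : shift2 (fun i => x (i + Z.pred k)%Z) = (fun i => x (i + k)%Z).
    by apply: funext => i; rewrite /shift2; f_equal; lia.
  exact: IHk.
Qed.

(* [w] occurs in [x] with its last symbol at position 0. *)
Definition ends_at (x : Z -> A) (w : seq A) :=
  mkseq (fun i => x (Z.of_nat i - Z.of_nat (size w).-1)%Z) (size w) = w.

Lemma ends_at_rcons x v b :
  ends_at x (rcons v b) <-> x 0%Z = b /\ ends_at (fun i => x (i - 1)%Z) v.
Proof.
rewrite /ends_at size_rcons /= mkseqS Z.sub_diag.
have -> : mkseq (fun i => x (Z.of_nat i - Z.of_nat (size v))%Z) (size v) =
          mkseq (fun i => x (Z.of_nat i - Z.of_nat (size v).-1 - 1)%Z) (size v).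
  apply/eq_in_map => i; rewrite mem_iota add0n => /= lt_iv.
  by f_equal; case: (size v) lt_iv => //= m _; lia.
by split=> [/rcons_inj [-> ->] | [-> ->]].
Qed.

Lemma ends_at_suffix x u v : ends_at x (u ++ v) -> ends_at x v.
Proof.
elim/last_ind: v x => [|v b IH] x //.
by rewrite -rcons_cat !ends_at_rcons => -[-> /IH].
Qed.

Lemma lang2_ends_at w : lang2 Y w <-> exists x, Y x /\ ends_at x w.
Proof.
split=> [[x [p [Yx ->]]] | [x [Yx xw]]].
  exists (fun i => x (i + (p + Z.of_nat (size w).-1))%Z); split; first exact: Y_translate.
  rewrite /ends_at size_mkseq; apply: eq_mkseq => i /=; f_equal; lia.
exists x, (- Z.of_nat (size w).-1)%Z; split => //.
by rewrite -[LHS]xw; apply: eq_mkseq => i /=; f_equal; lia.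
Qed.

Lemma lang2_suffix u v : lang2 Y (u ++ v) -> lang2 Y v.
Proof.
by move/lang2_ends_at => [x [Yx /ends_at_suffix xv]]; apply/lang2_ends_at; exists x.
Qed.

Lemma lang2_take k w : lang2 Y w -> lang2 Y (take k w).
Proof.
case=> x [p [Yx w_def]]; exists x, p; split => //.
rewrite {1}w_def /mkseq -map_take take_iota size_take.
by congr (map _ (iota 0 _)); rewrite -[in RHS]w_def size_mkseq.
Qed.

Lemma lang2_prefix u v : lang2 Y (u ++ v) -> lang2 Y u.
Proof. by move/(lang2_take (size u)); rewrite take_size_cat. Qed.

Lemma lang2_drop k w : lang2 Y w -> lang2 Y (drop k w).
Proof. by rewrite -{1}(cat_take_drop k w); apply: lang2_suffix. Qed.

Local Notation fol := (fol Xp Y).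
Local Notation significant := (significant Xp Y).
Local Notation is_sig := (is_sig Xp Y).

Lemma fol_ends_at w c :
  fol w c <-> exists x, Y x /\ ends_at x w /\ c = (fun i => x (Z.of_nat i)).
Proof.
split=> [[_ [x [Yx [xw c_def]]]] | [x [Yx [xw ->]]]].
  by exists x; do 2!split => //; apply: funext.
by split; [apply: Y_rays | exists x].
Qed.

Lemma fol_suffix u v c : fol (u ++ v) c -> fol v c.
Proof.
move/fol_ends_at => [x [Yx [/ends_at_suffix xv c_def]]].
by apply/fol_ends_at; exists x.
Qed.

(* Translating the witness one step to the right trades the last symbol [b]
   of the block for the first symbol [a] of the follower. *)
Lemma fol_rcons2 u a b c :
  fol (rcons (rcons u a) b) c <->
  c 0 = b /\ fol (rcons u a) (fun i => if i is j.+1 then c j else a).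
Proof.
split=> [/fol_ends_at [x [Yx [/ends_at_rcons [xb xua] c_def]]] |
         [cb /fol_ends_at [x [Yx [xua c_def]]]]].
  split; first by rewrite c_def.
  apply/fol_ends_at; exists (fun i => x (i - 1)%Z); split.
    by under eq_fun do rewrite -Z.add_opp_r; apply: Y_translate.
  split => //; move/ends_at_rcons: (xua) => [xa _].
  by apply: funext => -[|j]; rewrite ?xa // c_def; f_equal; lia.
apply/fol_ends_at; exists (fun i => x (i + 1)%Z); split; first exact: Y_translate.
split.
  apply/ends_at_rcons; split; first by rewrite -cb (congr1 (fun f => f 1) c_def).
  by under eq_fun do rewrite Z.sub_add.
apply: funext => i; rewrite (congr1 (fun f => f i.+1) c_def) /=; f_equal; lia.
Qed.

Definition same_fol v w := forall c, fol v c <-> fol w c.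

Lemma same_fol_trans u v w : same_fol u v -> same_fol v w -> same_fol u w.
Proof. by move=> uv vw c; rewrite uv vw. Qed.

Lemma same_fol_rcons u u' a b : same_fol (rcons u a) (rcons u' a) ->
  same_fol (rcons (rcons u a) b) (rcons (rcons u' a) b).
Proof. by move=> uu' c; rewrite !fol_rcons2 uu'. Qed.

Lemma same_fol_behead w :
  lang2 Y w -> 2 <= size w -> ~ significant w -> same_fol w (behead w).
Proof.
case: w => [|a w] //= Lw w_ge2 not_sig c; split; first exact: (@fol_suffix [:: a]).
move=> fol_w_c; apply: contrapT => not_fol; apply: not_sig; split => //; right.
by do 2!split => //; [move=> b; apply: (@fol_suffix [:: a]) | exists c].
Qed.

Lemma significant_rcons v b : 2 <= size v -> significant (rcons v b) -> significant v.
Proof.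
move=> v_ge2 sig_vb; apply: contrapT => not_sig_v.
have Lv : lang2 Y v.
  by case: sig_vb => Lvb _; apply: (@lang2_prefix v [:: b]); rewrite cats1.
have := same_fol_behead Lv v_ge2 not_sig_v.
case/lastP: v v_ge2 {Lv not_sig_v} sig_vb => [|[|c v] a] //= _ sig_vb.
rewrite -rcons_cons => /(same_fol_rcons b) vb_beh.
case: sig_vb => _ [|[_ [_ [d [fol_beh not_fol]]]]]; first by move/eqP; rewrite /= !size_rcons.
by apply/not_fol/vb_beh.
Qed.

(* [size w], i.e. the empty suffix, when no suffix of [w] is significant. *)
Definition sig_cut w :=
  find (fun k => `[< significant (drop k w) >]) (iota 0 (size w)).

Definition sig_suffix w := drop (sig_cut w) w.

Lemma sig_cutP w : lang2 Y w -> w != [::] ->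
  [/\ sig_cut w < size w, significant (sig_suffix w)
    & forall k, k < sig_cut w -> ~ significant (drop k w)].
Proof.
move=> Lw w_neq0; have w_gt0 : 0 < size w by rewrite lt0n size_eq0.
have has_sig : has (fun k => `[< significant (drop k w) >]) (iota 0 (size w)).
  apply/hasP; exists (size w).-1; first by rewrite mem_iota add0n prednK // leqnn andbT.
  apply/asboolT; split; first exact: lang2_drop.
  by left; rewrite size_drop; lia.
have lt_cut : sig_cut w < size w by move: has_sig; rewrite has_find size_iota.
split => //.
  by have := nth_find 0 has_sig; rewrite nth_iota // add0n => /asboolP.
move=> k lt_k; have := before_find 0 lt_k.
by rewrite nth_iota ?add0n => [/asboolP|]; last exact: ltn_trans lt_k lt_cut.
Qed.

Lemma sig_suffixP w : lang2 Y w -> w != [::] -> is_sig w (sig_suffix w).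
Proof.
move=> Lw w_neq0; have [lt_cut sig_s before_cut] := sig_cutP Lw w_neq0.
split; first by exists (take (sig_cut w) w); rewrite cat_take_drop.
split => // u' v' w_def sig_v'.
have v'_def : v' = drop (size u') w by rewrite w_def drop_size_cat.
case: (ltnP (size u') (sig_cut w)) => [lt_u' | le_u'].
  by case: (before_cut _ lt_u'); rewrite -v'_def.
by rewrite v'_def !size_drop leq_sub2l.
Qed.

Lemma is_sig_unique w v1 v2 : is_sig w v1 -> is_sig w v2 -> v1 = v2.
Proof.
move=> [[u1 w1] [sig1 max1]] [[u2 w2] [sig2 max2]].
have sz_v : size v1 = size v2.
  by apply/eqP; rewrite eqn_leq (max1 _ _ w2 sig2) (max2 _ _ w1 sig1).
have sz_u : size u1 = size u2.
  by apply/eqP; rewrite -(eqn_add2r (size v1)) -size_cat -w1 w2 size_cat sz_v.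
by rewrite -(drop_size_cat v1 (erefl (size u1))) -w1 sz_u w2 drop_size_cat.
Qed.

Lemma same_fol_sig_suffix w : lang2 Y w -> w != [::] -> same_fol w (sig_suffix w).
Proof.
move=> Lw w_neq0; have [lt_cut _ before_cut] := sig_cutP Lw w_neq0.
suff : forall j, j <= sig_cut w -> same_fol w (drop j w) by apply.
elim=> [|j IHj] le_j; first by rewrite drop0.
apply: (same_fol_trans (IHj (ltnW le_j))); rewrite -behead_drop.
apply: same_fol_behead; [exact: lang2_drop | | exact: before_cut].
by rewrite size_drop; lia.
Qed.

Lemma last_sig_suffix x0 w : lang2 Y w -> w != [::] -> last x0 (sig_suffix w) = last x0 w.
Proof. by move=> Lw w_neq0; have [lt_cut _ _] := sig_cutP Lw w_neq0; apply: last_drop. Qed.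

Lemma sig_suffix1 a : lang2 Y [:: a] -> sig_suffix [:: a] = [:: a].
Proof. by move=> La; have [] := sig_cutP La isT; rewrite /sig_suffix; case: sig_cut. Qed.

Lemma lang2_rcons_sig_suffix w b : lang2 Y (rcons w b) -> lang2 Y (rcons (sig_suffix w) b).
Proof.
by move=> Lwb; apply: (@lang2_suffix (take (sig_cut w) w)); rewrite -rcons_cat cat_take_drop.
Qed.

(* [w] and [sig_suffix w] have the same followers. *)
Lemma lang2_rcons w b : lang2 Y w -> w != [::] ->
  lang2 Y (rcons (sig_suffix w) b) -> lang2 Y (rcons w b).
Proof.
move=> Lw w_neq0 /lang2_ends_at [x [Yx /ends_at_rcons [xb xs]]].
have : fol (sig_suffix w) (fun i => x (Z.of_nat i - 1)%Z).
  apply/fol_ends_at; exists (fun i => x (i - 1)%Z); split => //.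
  by under eq_fun do rewrite -Z.add_opp_r; apply: Y_translate.
move/(same_fol_sig_suffix Lw w_neq0)/fol_ends_at => [y [Yy [yw y_def]]].
apply/lang2_ends_at; exists (fun i => y (i + 1)%Z); split; first exact: Y_translate.
apply/ends_at_rcons; split; first by rewrite -xb (congr1 (fun f => f 1) y_def).
by under eq_fun do rewrite Z.sub_add.
Qed.

Lemma sig_suffix_rcons_size w b : lang2 Y (rcons w b) -> w != [::] ->
  size (sig_suffix (rcons w b)) <= size (rcons (sig_suffix w) b).
Proof.
move=> Lwb w_neq0.
have Lw : lang2 Y w by move: Lwb; rewrite -cats1; apply: lang2_prefix.
have [lt_cut _ before_cut] := sig_cutP Lw w_neq0.
have [lt_cutb sig_sb _] := sig_cutP Lwb (rcons_neq0 b w).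
rewrite leqNgt; apply/negP; rewrite size_rcons !size_drop size_rcons => gt_sb.
have lt_j : sig_cut (rcons w b) < sig_cut w by lia.
apply: (before_cut _ lt_j); apply: (significant_rcons (b := b)).
  by rewrite size_drop; lia.
by rewrite -drop_rcons //; lia.
Qed.

Lemma sig_suffix_rcons w b : lang2 Y (rcons w b) -> w != [::] ->
  sig_suffix (rcons w b) = sig_suffix (rcons (sig_suffix w) b).
Proof.
move=> Lwb w_neq0.
have wb_def : rcons w b = take (sig_cut w) w ++ rcons (sig_suffix w) b.
  by rewrite -rcons_cat cat_take_drop.
have [[u' wb_u'] [sig_sb max_sb]] := sig_suffixP Lwb (rcons_neq0 b w).
have [u sb_u] := suffix_of_cat_size wb_u' wb_def (sig_suffix_rcons_size Lwb w_neq0).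
apply: (@is_sig_unique (rcons (sig_suffix w) b)).
  split; first by exists u.
  split => // u2 v2 sb_def sig_v2; apply: (max_sb (take (sig_cut w) w ++ u2)) => //.
  by rewrite wb_def sb_def catA.
by apply: sig_suffixP; [apply: lang2_rcons_sig_suffix | apply: rcons_neq0].
Qed.

Definition sig_path (w : seq A) := [seq sig_suffix (take k w) | k <- iota 1 (size w)].

Lemma nth_sig_path w i : i < size w -> nth [::] (sig_path w) i = sig_suffix (take i.+1 w).
Proof. by move=> lt_iw; rewrite (nth_map 0) ?size_iota // nth_iota. Qed.

Lemma arrow_sig_suffix w b : lang2 Y (rcons w b) -> w != [::] ->
  arrow Xp Y (sig_suffix w) (sig_suffix (rcons w b)).
Proof.
move=> Lwb w_neq0; exists b; split; first exact: lang2_rcons_sig_suffix.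
rewrite sig_suffix_rcons //.
by apply: sig_suffixP; [apply: lang2_rcons_sig_suffix | apply: rcons_neq0].
Qed.

Lemma sig_path_HBpath w : lang2 Y w -> 0 < size w -> HBpath Xp Y (size w) (sig_path w).
Proof.
move=> Lw w_gt0; split; first by rewrite size_map size_iota.
split.
  move=> v /mapP [k]; rewrite mem_iota => /andP [k_gt0 le_kw] ->.
  have [_ []] := sig_suffixP (lang2_take k Lw) (take_neq0 k_gt0 le_kw).
  by rewrite add1n ltnS in le_kw.
split.
  case: w w_gt0 Lw => // a w _ La.
  have La1 : lang2 Y [:: a] by move: (lang2_take 1 La); rewrite /= take0.
  by rewrite /= take0 sig_suffix1.
move=> i lt_i; rewrite !nth_sig_path; try lia.
case: w w_gt0 Lw lt_i => // a w _ Lw lt_i.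
rewrite [take i.+2 _](take_nth a) //; apply: arrow_sig_suffix => //.
by rewrite -take_nth //; apply: lang2_take.
Qed.

Lemma HBpath_sig_path n p : 0 < n -> HBpath Xp Y n p ->
  exists2 w, lang2 Y w /\ size w = n & p = sig_path w.
Proof.
move=> n_gt0 [sz_p [sig_p [sz_hd arr_p]]].
case: p sz_p sig_p sz_hd arr_p => [|[|a []] p] //= sz_p sig_p _ arr_p.
set q := [:: a] :: p in sz_p sig_p arr_p *.
set w := [seq last a v | v <- q].
have sz_w : size w = n by rewrite size_map.
have prefixes k : k < n ->
    lang2 Y (take k.+1 w) /\ nth [::] q k = sig_suffix (take k.+1 w).
  elim: k => [|k IHk] lt_k.
    have La : lang2 Y [:: a] by case: (sig_p _ (mem_head _ _)).
    by rewrite /= take0 sig_suffix1.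
  have [Lk qk] := IHk (ltnW lt_k).
  have [b [Lkb is_sig_b]] := arr_p k lt_k; rewrite qk in Lkb is_sig_b.
  have wk_neq0 : take k.+1 w != [::] by [].
  have Lwb := lang2_rcons Lk wk_neq0 Lkb.
  have qk1 : nth [::] q k.+1 = sig_suffix (rcons (take k.+1 w) b).
    rewrite sig_suffix_rcons //; apply: (is_sig_unique is_sig_b).
    by apply: sig_suffixP => //; apply: rcons_neq0.
  have wk1 : nth a w k.+1 = b.
    have -> : nth a w k.+1 = last a (nth [::] q k.+1) by rewrite (nth_map [::]) //= sz_p.
    by rewrite qk1 last_sig_suffix ?last_rcons ?rcons_neq0.
  by rewrite (take_nth a) ?sz_w // wk1.
exists w; last first.
  apply: (eq_from_nth (x0 := [::])); first by rewrite size_map size_iota sz_w -sz_p.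
  move=> i /= lt_i; have lt_in : i < n by rewrite -sz_p.
  by rewrite nth_sig_path ?sz_w //; case: (prefixes i lt_in).
split => //; have [] := prefixes n.-1 _; first by lia.
by rewrite prednK // -sz_w take_size.
Qed.

Lemma sig_path_inj w1 w2 : lang2 Y w1 -> lang2 Y w2 -> sig_path w1 = sig_path w2 -> w1 = w2.
Proof.
move=> L1 L2 eq_p.
have sz_w : size w1 = size w2 by have := congr1 size eq_p; rewrite !size_map !size_iota.
case: w1 L1 sz_w eq_p => [|a w1] L1 sz_w eq_p; first by move/esym/size0nil: sz_w.
apply: (eq_from_nth (x0 := a)) => // i lt_i.
have last_nth w : lang2 Y w -> i < size w -> last a (nth [::] (sig_path w) i) = nth a w i.
  move=> Lw lt_iw; rewrite nth_sig_path // last_sig_suffix.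
  - by rewrite (take_nth a) // last_rcons.
  - exact: lang2_take.
  - exact: take_neq0.
by rewrite -last_nth // eq_p last_nth // -sz_w.
Qed.

Lemma HBpath_count_lang2 n : 0 < n -> HBpath_count Xp Y n (complexity (lang2 Y) n).
Proof.
move=> n_gt0; set S := [set t : n.-tuple A | `[< lang2 Y (val t) >]].
exists [seq sig_path (val t) | t <- enum S]; split.
  rewrite map_inj_in_uniq ?enum_uniq // => t1 t2.
  rewrite !mem_enum !inE => /asboolP L1 /asboolP L2 /(sig_path_inj L1 L2).
  exact: val_inj.
split; last by rewrite size_map /complexity cardE.
move=> p; split.
  case/mapP => t; rewrite mem_enum inE => /asboolP Lt ->.
  by rewrite -{1}(size_tuple t); apply: sig_path_HBpath; rewrite ?size_tuple.
move=> /(HBpath_sig_path n_gt0) [w [Lw /eqP sz_w] ->].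
by apply/mapP; exists (Tuple sz_w) => //; rewrite mem_enum inE; apply/asboolT.
Qed.

End HBDiagram.

Lemma natext_shift2 (A : finType) (Xp : (nat -> A) -> Prop) x :
  natext Xp x <-> natext Xp (shift2 x).
Proof.
split=> Xx p.
  have -> : (fun i => shift2 x (p + Z.of_nat i)%Z) = (fun i => x (p + 1 + Z.of_nat i)%Z).
    by apply: funext => i; rewrite /shift2; f_equal; lia.
  exact: Xx.
have -> : (fun i => x (p + Z.of_nat i)%Z) = (fun i => shift2 x (p - 1 + Z.of_nat i)%Z).
  by apply: funext => i; rewrite /shift2; f_equal; lia.
exact: Xx.
Qed.

Theorem corollary5p9 (A : finType) :
  (* one-sided case *)
  (forall Xp : (nat -> A) -> Prop,
     one_sided_subshift Xp ->
     (forall w, lang1 Xp w <-> lang2 (natext Xp) w) ->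
     forall n : nat, 1 <= n ->
       HBpath_count Xp (natext Xp) n (complexity (lang1 Xp) n)) /\
  (* two-sided case (here \tilde X = X and X^+ = right rays of X) *)
  (forall X : (Z -> A) -> Prop,
     two_sided_subshift X ->
     forall n : nat, 1 <= n ->
       HBpath_count (rays X) X n (complexity (lang2 X) n)).
Proof.
split.
- move=> Xp _ L1_L2 n n_gt0.
  have -> : lang1 Xp = lang2 (natext Xp) by apply: funext => w; apply: propext.
  apply: HBpath_count_lang2 => // [|x Xx]; first exact: natext_shift2.
  exact: Xx 0%Z.
- move=> X [_ [_ X_shift2]] n n_gt0.
  by apply: HBpath_count_lang2 => // x Xx; exists x.
Qed.
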